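(* There is a Borel function $f:(\omega^\omega)^3\to\omega^\omega$ which has no superperfect free subset.
   Context: A tree $T\subseteq\omega^{<\omega}$ is superperfect if for every $\sigma\in T$ there is $\tau\supseteq\sigma$ in $T$ such that $\tau^\frown\langle n\rangle\in T$ for infinitely many $n$; a superperfect set is a set of the form $[T]$ (the infinite branches of $T$) for a superperfect tree $T$. A set $A\subseteq\omega^\omega$ is free for $f:(\omega^\omega)^3\to\omega^\omega$ if for all $(a_0,a_1,a_2)\in A^3$, $f(a_0,a_1,a_2)\in\{a_0,a_1,a_2\}\cup(\omega^\omega\setminus A)$. *)

From Stdlib Require Import List Arith.
Import ListNotations.

Definition baire := nat -> nat.
Definition triple := (baire * baire * baire)%type.

Definition restr (x : baire) (n : nat) : list nat := map x (seq 0 n).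

Definition open_baire (U : baire -> Prop) : Prop :=
  forall x, U x -> exists n, forall y, restr y n = restr x n -> U y.

Definition open_triple (U : triple -> Prop) : Prop :=
  forall a, U a -> exists n, forall b,
      restr (fst (fst b)) n = restr (fst (fst a)) n ->
      restr (snd (fst b)) n = restr (snd (fst a)) n ->
      restr (snd b) n = restr (snd a) n -> U b.

Inductive borel_triple : (triple -> Prop) -> Prop :=
  | borel_open U : open_triple U -> borel_triple U
  | borel_compl U : borel_triple U -> borel_triple (fun a => ~ U a)
  | borel_cunion (F : nat -> triple -> Prop) :
      (forall i, borel_triple (F i)) -> borel_triple (fun a => exists i, F i a)
  | borel_ext U V : (forall a, U a <-> V a) -> borel_triple U -> borel_triple V.

Definition borel_fun (f : triple -> baire) : Prop :=
  forall U, open_baire U -> borel_triple (fun a => U (f a)).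

Definition is_tree (T : list nat -> Prop) : Prop :=
  T [] /\ forall s t, T (s ++ t) -> T s.

Definition extends (t s : list nat) : Prop := exists u, t = s ++ u.

Definition superperfect_tree (T : list nat -> Prop) : Prop :=
  is_tree T /\
  forall s, T s -> exists t, extends t s /\ T t /\
     (forall m, exists n, m <= n /\ T (t ++ [n])).

Definition branches (T : list nat -> Prop) (x : baire) : Prop :=
  forall n, T (restr x n).

Definition superperfect_set (A : baire -> Prop) : Prop :=
  exists T, superperfect_tree T /\ forall x, A x <-> branches T x.

Definition free_for (f : triple -> baire) (A : baire -> Prop) : Prop :=
  forall a0 a1 a2, A a0 -> A a1 -> A a2 ->
    let y := f (a0, a1, a2) in
    y = a0 \/ y = a1 \/ y = a2 \/ ~ A y.

(* Index i is a record of coordinate j of a triple when the value of that coordinate at i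
   exceeds all earlier values of the three coordinates and the other two values at i.  The
   decoder reads the successive record holders, ignoring repetitions, as moves on Z/3: a move
   forward closes the current output entry, a move backward increments it.  Each finite output
   depends on finitely many coordinates and the outputs grow, so their limit is Borel.

   Given a superperfect tree T, take a splitting node t with children c <> c', a branch w
   through t ++ [c], and a splitting node rho above t ++ [c'].  Three branches through rho are
   built in stages: the current leader sits at a splitting node, so it can be given a value
   exceeding everything else built in that stage, while the next leader is moved up to a fresh
   splitting node.  Scheduling the leaders to transmit w makes the decoder map the three
   branches to w, which lies in [T] but differs from all of them. *)

From Stdlib Require Import Bool List Arith Lia ClassicalEpsilon Classical FunctionalExtensionality.
Import ListNotations.

Lemma extends_refl s : extends s s.
Proof. exists []. now rewrite app_nil_r. Qed.

Lemma extends_app s u : extends (s ++ u) s.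
Proof. now exists u. Qed.

Lemma extends_trans s t u : extends u t -> extends t s -> extends u s.
Proof. intros [v ->] [v' ->]. exists (v' ++ v). now rewrite app_assoc. Qed.

Lemma extends_length s t : extends t s -> length s <= length t.
Proof. intros [u ->]. rewrite length_app. lia. Qed.

Lemma extends_nth s t i : extends t s -> i < length s -> nth i t 0 = nth i s 0.
Proof. intros [u ->] Hi. now apply app_nth1. Qed.

Lemma extends_chain (c : nat -> list nat) :
  (forall k, extends (c (S k)) (c k)) -> forall k m, k <= m -> extends (c m) (c k).
Proof.
  intros Hc k m Hkm. induction Hkm as [|m _ IH]; [apply extends_refl|].
  exact (extends_trans _ _ _ (Hc m) IH).
Qed.

Lemma in_extends s t x : extends t s -> In x s -> In x t.
Proof. intros [u ->] Hx. apply in_or_app. now left. Qed.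

Lemma le_list_max x l : In x l -> x <= list_max l.
Proof.
  intros Hx. pose proof (proj1 (list_max_le l (list_max l)) (le_n _)) as Hmax.
  rewrite Forall_forall in Hmax. now apply Hmax.
Qed.

Lemma length_restr x n : length (restr x n) = n.
Proof. unfold restr. now rewrite length_map, length_seq. Qed.

Lemma nth_restr x n i : i < n -> nth i (restr x n) 0 = x i.
Proof.
  intros Hi. unfold restr.
  rewrite nth_indep with (d' := x 0) by (rewrite length_map, length_seq; lia).
  now rewrite map_nth, seq_nth.
Qed.

Lemma restr_S x n : restr x (S n) = restr x n ++ [x n].
Proof. unfold restr. now rewrite seq_S, map_app. Qed.

Lemma restr_extends x n m : n <= m -> extends (restr x m) (restr x n).
Proof.
  intros Hnm. unfold restr. replace m with (n + (m - n)) by lia.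
  rewrite seq_app, map_app. apply extends_app.
Qed.

Lemma restr_eq_nth x s i : restr x (length s) = s -> i < length s -> x i = nth i s 0.
Proof. intros Hx Hi. rewrite <- (nth_restr x (length s) i Hi). now rewrite Hx. Qed.

Lemma restr_eq_at x y n i : restr x n = restr y n -> i < n -> x i = y i.
Proof. intros Hxy Hi. now rewrite <- (nth_restr x n i Hi), Hxy, nth_restr. Qed.

Lemma dependent_choice {X : Type} (P : nat -> X -> Prop) (R : nat -> X -> X -> Prop) (x0 : X) :
  P 0 x0 -> (forall k x, P k x -> exists y, P (S k) y /\ R k x y) ->
  exists f : nat -> X, f 0 = x0 /\ forall k, P k (f k) /\ R k (f k) (f (S k)).
Proof.
  intros H0 Hstep.
  set (next k x := epsilon (inhabits x) (fun y => P (S k) y /\ R k x y)).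
  set (f := fix f k := match k with 0 => x0 | S k => next k (f k) end).
  assert (Hnext : forall k x, P k x -> P (S k) (next k x) /\ R k x (next k x)).
  { intros k x Hx. exact (epsilon_spec (inhabits x) _ (Hstep k x Hx)). }
  assert (Hf : forall k, P k (f k)).
  { induction k as [|k IH]; [exact H0|]. exact (proj1 (Hnext k _ IH)). }
  exists f. split; [reflexivity|]. intros k. split; [apply Hf|]. exact (proj2 (Hnext k _ (Hf k))).
Qed.

Lemma borel_triple_const (P : Prop) : borel_triple (fun _ => P).
Proof. apply borel_open. intros a Ha. now exists 0. Qed.

Lemma borel_triple_or U V :
  borel_triple U -> borel_triple V -> borel_triple (fun a => U a \/ V a).
Proof.
  intros HU HV.
  apply borel_ext with (fun a => exists i, match i with 0 => U a | _ => V a end).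
  - intros a. split; [intros [[|i] H]; auto | intros [H|H]; [exists 0 | exists 1]; auto].
  - apply (borel_cunion (fun i a => match i with 0 => U a | _ => V a end)). now intros [|i].
Qed.

Lemma borel_triple_and U V :
  borel_triple U -> borel_triple V -> borel_triple (fun a => U a /\ V a).
Proof.
  intros HU HV. apply borel_ext with (fun a => ~ (~ U a \/ ~ V a)).
  - intros a. split; [intros H; split; apply NNPP; tauto | tauto].
  - apply borel_compl, borel_triple_or; now apply borel_compl.
Qed.

Lemma borel_restr_of_coords (g : triple -> baire) :
  (forall n m, borel_triple (fun a => g a n = m)) ->
  forall n (P : list nat -> Prop), borel_triple (fun a => P (restr (g a) n)).
Proof.
  intros Hg n. induction n as [|n IH]; intros P; [exact (borel_triple_const (P []))|].
  apply borel_ext with (fun a => exists m, g a n = m /\ P (restr (g a) n ++ [m])).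
  - intros a. rewrite restr_S. split; [intros [m [-> H]]; exact H | eauto].
  - apply (borel_cunion (fun m a => g a n = m /\ P (restr (g a) n ++ [m]))). intros m.
    apply borel_triple_and; [apply Hg | exact (IH (fun l => P (l ++ [m])))].
Qed.

Lemma borel_fun_of_coords (g : triple -> baire) :
  (forall n m, borel_triple (fun a => g a n = m)) -> borel_fun g.
Proof.
  intros Hg U HU.
  apply borel_ext with (fun a => exists n, forall y, restr y n = restr (g a) n -> U y).
  - intros a. split; [intros [n Hn]; now apply Hn | intros H; destruct (HU _ H) as [n Hn]; eauto].
  - apply (borel_cunion (fun n a => forall y, restr y n = restr (g a) n -> U y)). intros n.
    exact (borel_restr_of_coords g Hg n (fun l => forall y, restr y n = l -> U y)).
Qed.

(* The entry at [n] is [0] when no [o N] is long enough to have one. *)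
Definition eventual (o : nat -> list nat) : baire :=
  fun n => nth n (o (epsilon (inhabits 0) (fun N => n < length (o N)))) 0.

Lemma eventual_nth o N n :
  (forall N, extends (o (S N)) (o N)) -> n < length (o N) -> eventual o n = nth n (o N) 0.
Proof.
  intros Ho Hn. unfold eventual.
  set (M := epsilon _ _).
  assert (HM : n < length (o M))
    by exact (epsilon_spec (inhabits 0) (fun N => n < length (o N)) (ex_intro _ N Hn)).
  destruct (Nat.le_ge_cases N M) as [H|H].
  - apply extends_nth; auto. now apply extends_chain.
  - symmetry. apply extends_nth; auto. now apply extends_chain.
Qed.

Lemma eventual_overflow o n : (forall N, length (o N) <= n) -> eventual o n = 0.
Proof. intros Ho. apply nth_overflow, Ho. Qed.

Lemma borel_eventual (o : triple -> nat -> list nat) :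
  (forall N (P : list nat -> Prop), open_triple (fun a => P (o a N))) ->
  (forall a N, extends (o a (S N)) (o a N)) ->
  borel_fun (fun a => eventual (o a)).
Proof.
  intros Hopen Hmono. apply borel_fun_of_coords. intros n m.
  set (defined a := exists N, n < length (o a N)).
  apply borel_ext with (fun a => (exists N, n < length (o a N) /\ nth n (o a N) 0 = m)
                                 \/ (~ defined a /\ m = 0)).
  - intros a. assert (Hundef : ~ defined a -> forall N, length (o a N) <= n).
    { intros H N. apply Nat.nlt_ge. intros HN. apply H. now exists N. }
    split.
    + intros [[N [HN <-]] | [HN ->]];
        [now apply eventual_nth | now apply eventual_overflow, Hundef].
    + intros <-. destruct (classic (defined a)) as [[N HN]|HN].
      * left. exists N. split; auto. symmetry. now apply eventual_nth.
      * right. split; auto. now apply eventual_overflow, Hundef.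
  - apply borel_triple_or.
    + apply (borel_cunion (fun N a => n < length (o a N) /\ nth n (o a N) 0 = m)). intros N.
      apply borel_open, (Hopen N (fun l => n < length l /\ nth n l 0 = m)).
    + apply borel_triple_and; [|apply borel_triple_const].
      apply borel_compl, (borel_cunion (fun N a => n < length (o a N))). intros N.
      apply borel_open, (Hopen N (fun l => n < length l)).
Qed.

Definition coord (a : triple) (j : nat) : baire :=
  match j with 0 => fst (fst a) | 1 => snd (fst a) | _ => snd a end.

Lemma coord_triple (x : nat -> baire) j : j < 3 -> coord (x 0, x 1, x 2) j = x j.
Proof. intros Hj. now destruct j as [|[|[|j]]]; [..|lia]. Qed.

Definition leads (a : triple) (j i : nat) : bool :=
  let v := coord a j i in
  forallb (fun i' => forallb (fun j' => coord a j' i' <? v) [0; 1; 2]) (seq 0 i)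
  && forallb (fun j' => (j' =? j) || (coord a j' i <? v)) [0; 1; 2].

Lemma leadsP a j i :
  leads a j i = true <->
  (forall i' j', i' < i -> j' < 3 -> coord a j' i' < coord a j i) /\
  (forall j', j' < 3 -> j' <> j -> coord a j' i < coord a j i).
Proof.
  assert (In3 : forall j', In j' [0; 1; 2] <-> j' < 3) by (simpl; lia).
  unfold leads. rewrite andb_true_iff, !forallb_forall.
  setoid_rewrite forallb_forall. setoid_rewrite in_seq. setoid_rewrite In3.
  setoid_rewrite orb_true_iff. setoid_rewrite Nat.eqb_eq. setoid_rewrite Nat.ltb_lt.
  split; intros [H1 H2]; split.
  - intros i' j' Hi' Hj'. apply H1; auto. lia.
  - intros j' Hj' Hne. destruct (H2 j' Hj'); tauto.
  - intros i' Hi' j' Hj'. apply H1; auto. lia.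
  - intros j' Hj'. destruct (Nat.eq_dec j' j); auto.
Qed.

Definition record (a : triple) (i : nat) : option nat := find (fun j => leads a j i) [0; 1; 2].

Lemma record_Some a i j : record a i = Some j -> j < 3 /\ leads a j i = true.
Proof. intros H. apply find_some in H. simpl in H. split; [lia | tauto]. Qed.

Lemma record_leader a i j : j < 3 -> leads a j i = true -> record a i = Some j.
Proof.
  intros Hj Hlead. unfold record. destruct (find _ _) as [j'|] eqn:E.
  - apply find_some in E as [Hj' Hlead']. simpl in Hj'.
    destruct (Nat.eq_dec j' j) as [->|Hne]; auto.
    apply leadsP in Hlead as [_ Hlead], Hlead' as [_ Hlead'].
    specialize (Hlead j'). specialize (Hlead' j). lia.
  - rewrite (find_none _ _ E j) in Hlead; [discriminate | simpl; lia].
Qed.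

Lemma record_tie a i : coord a 0 i = coord a 1 i -> coord a 1 i = coord a 2 i -> record a i = None.
Proof.
  intros E01 E12. destruct (record a i) as [j|] eqn:E; auto.
  apply record_Some in E as [Hj Hlead]. apply leadsP in Hlead as [_ Hlead].
  destruct j as [|[|[|j]]]; [specialize (Hlead 1) | specialize (Hlead 0) ..]; lia.
Qed.

Definition agree_below (a b : triple) (N : nat) : Prop :=
  forall j i, i < N -> coord a j i = coord b j i.

Lemma leads_agree a b j i : agree_below a b (S i) -> leads a j i = leads b j i.
Proof.
  intros Hab.
  assert (E : forall j' i', i' <= i -> coord a j' i' = coord b j' i') by (intros; apply Hab; lia).
  apply Bool.eq_true_iff_eq. rewrite !leadsP.
  split; intros [H1 H2]; split; intros;
    first [rewrite <- !E by lia; now auto | rewrite !E by lia; now auto].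
Qed.

Lemma record_agree a b i : agree_below a b (S i) -> record a i = record b i.
Proof.
  intros Hab. unfold record. simpl. now rewrite !(leads_agree a b _ i Hab).
Qed.

Lemma open_triple_of_agree (F : triple -> list nat) N (P : list nat -> Prop) :
  (forall a b, agree_below a b N -> F a = F b) -> open_triple (fun a => P (F a)).
Proof.
  intros HF a Ha. exists N. intros b H0 H1 H2. rewrite (HF b a); auto.
  intros [|[|j]] i Hi; simpl; eapply restr_eq_at; eauto.
Qed.

Record decoder_state := { last_leader : option nat; output : list nat; counter : nat }.

Definition decoder_init : decoder_state := {| last_leader := None; output := []; counter := 0 |}.

Definition decoder_step (s : decoder_state) (r : option nat) : decoder_state :=
  match r, last_leader s with
  | None, _ => s
  | Some j, None => {| last_leader := Some j; output := output s; counter := counter s |}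
  | Some j, Some p =>
      if p =? j then s
      else if j =? S p mod 3
      then {| last_leader := Some j; output := output s ++ [counter s]; counter := 0 |}
      else {| last_leader := Some j; output := output s; counter := S (counter s) |}
  end.

Fixpoint run (r : nat -> option nat) (N : nat) : decoder_state :=
  match N with 0 => decoder_init | S N => decoder_step (run r N) (r N) end.

Definition decoder (a : triple) : baire := eventual (fun N => output (run (record a) N)).

Lemma output_decoder_step s r : extends (output (decoder_step s r)) (output s).
Proof.
  unfold decoder_step. destruct r as [j|], (last_leader s) as [p|]; try apply extends_refl.
  destruct (p =? j); [|destruct (j =? S p mod 3)]; simpl;
    first [apply extends_refl | apply extends_app].
Qed.

Lemma decoder_step_last s : decoder_step s (last_leader s) = s.
Proof. unfold decoder_step. destruct (last_leader s) as [p|]; auto. now rewrite Nat.eqb_refl. Qed.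

Lemma last_decoder_step s j : last_leader (decoder_step s (Some j)) = Some j.
Proof.
  unfold decoder_step. destruct (last_leader s) as [p|] eqn:E; auto.
  destruct (Nat.eqb_spec p j) as [<-|_]; auto. now destruct (j =? S p mod 3).
Qed.

Lemma run_record_agree a b N : agree_below a b N -> run (record a) N = run (record b) N.
Proof.
  induction N as [|N IH]; intros Hab; auto. simpl.
  rewrite IH by (intros j i Hi; apply Hab; lia).
  now rewrite (record_agree a b N).
Qed.

Lemma borel_decoder : borel_fun decoder.
Proof.
  apply borel_eventual.
  - intros N P. apply (open_triple_of_agree _ N). intros a b Hab.
    now rewrite (run_record_agree a b N Hab).
  - intros a N. apply output_decoder_step.
Qed.

Lemma run_idle r M N :
  M <= N -> (forall i, M <= i < N -> r i = None \/ r i = last_leader (run r M)) ->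
  run r N = run r M.
Proof.
  intros HMN Hidle. induction HMN as [|N HMN IH]; auto. simpl.
  rewrite IH by (intros; apply Hidle; lia).
  destruct (Hidle N) as [-> | ->]; [lia | reflexivity | apply decoder_step_last].
Qed.

Definition follows (r : nat -> option nat) (L pos : nat -> nat) : Prop :=
  (forall k, pos k < pos (S k)) /\
  (forall i, i < pos 0 -> r i = None) /\
  (forall k, r (pos k) = Some (L k)) /\
  (forall k i, pos k < i < pos (S k) -> r i = None \/ r i = Some (L k)).

Lemma run_follows r L pos :
  follows r L pos -> forall k, run r (S (pos k)) = run (fun i => Some (L i)) (S k).
Proof.
  intros (Hpos & Hbefore & Hevent & Hbetween) k. induction k as [|k IH].
  - simpl. rewrite Hevent, (run_idle r 0 (pos 0)); auto with arith.
    intros i Hi. left. apply Hbefore. lia.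
  - change (run r (S (pos (S k)))) with (decoder_step (run r (pos (S k))) (r (pos (S k)))).
    rewrite Hevent, (run_idle r (S (pos k)) (pos (S k))), IH; [reflexivity | apply Hpos |].
    intros i Hi. rewrite IH. cbn [run]. rewrite last_decoder_step. apply Hbetween. lia.
Qed.

Record schedule_state := { leader : nat; sent : nat; tally : nat }.

Section Schedule.

Variable w : baire.

(* To transmit [w n] the leader steps back [w n] times and then forward once. *)
Fixpoint schedule (k : nat) : schedule_state :=
  match k with
  | 0 => {| leader := 0; sent := 0; tally := 0 |}
  | S k =>
      let s := schedule k in
      if tally s <? w (sent s)
      then {| leader := (leader s + 2) mod 3; sent := sent s; tally := S (tally s) |}
      else {| leader := (leader s + 1) mod 3; sent := S (sent s); tally := 0 |}
  end.

Lemma schedule_inv k : leader (schedule k) < 3 /\ tally (schedule k) <= w (sent (schedule k)).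
Proof.
  induction k as [|k [Hl Ht]]; [simpl; lia|]. cbn [schedule].
  destruct (Nat.ltb_spec (tally (schedule k)) (w (sent (schedule k)))); cbn [leader sent tally];
    split; try lia; apply Nat.mod_upper_bound; lia.
Qed.

Lemma leader_moves k : leader (schedule (S k)) <> leader (schedule k).
Proof.
  destruct (schedule_inv k) as [Hl _]. simpl.
  destruct (tally (schedule k) <? w (sent (schedule k))); simpl;
    destruct (leader (schedule k)) as [|[|[|h]]]; simpl; lia.
Qed.

Lemma run_schedule k :
  run (fun i => Some (leader (schedule i))) (S k) =
  {| last_leader := Some (leader (schedule k));
     output := map w (seq 0 (sent (schedule k)));
     counter := tally (schedule k) |}.
Proof.
  induction k as [|k IH]; [reflexivity|].
  change (run ?r (S (S k))) with (decoder_step (run r (S k)) (r (S k))). rewrite IH.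
  destruct (schedule_inv k) as [Hl Ht]. pose proof (leader_moves k) as Hmove.
  unfold decoder_step. cbn [last_leader output counter schedule] in Hmove |- *.
  set (s := schedule k) in *.
  destruct (Nat.ltb_spec (tally s) (w (sent s))); cbn [leader sent tally] in Hmove |- *.
  - destruct (Nat.eqb_spec (leader s) ((leader s + 2) mod 3)); [lia|].
    replace ((leader s + 2) mod 3 =? S (leader s) mod 3) with false
      by (symmetry; apply Nat.eqb_neq; destruct (leader s) as [|[|[|h]]]; simpl; lia).
    reflexivity.
  - destruct (Nat.eqb_spec (leader s) ((leader s + 1) mod 3)); [lia|].
    rewrite Nat.add_1_r, Nat.eqb_refl, seq_S, map_app, Nat.add_0_l. cbn [map].
    replace (tally s) with (w (sent s)) by lia. reflexivity.
Qed.

Lemma sent_unbounded n : exists k, n < sent (schedule k).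
Proof.
  assert (Hnext : forall d k, w (sent (schedule k)) - tally (schedule k) = d ->
                  exists k', sent (schedule k') = S (sent (schedule k))).
  { induction d as [|d IH]; intros k Hd.
    all: destruct (Nat.ltb_spec (tally (schedule k)) (w (sent (schedule k)))) as [Hlt|Hge];
      [|exists (S k); cbn [schedule]; now rewrite (proj2 (Nat.ltb_ge _ _) Hge)].
    - lia.
    - assert (E : sent (schedule (S k)) = sent (schedule k) /\
                    tally (schedule (S k)) = S (tally (schedule k)))
        by (cbn [schedule]; now rewrite (proj2 (Nat.ltb_lt _ _) Hlt)).
      destruct (IH (S k)) as [k' Hk']; [rewrite (proj1 E), (proj2 E); lia|].
      exists k'. now rewrite Hk', (proj1 E). }
  induction n as [|n [k Hk]].
  - destruct (Hnext _ 0 eq_refl) as [k Hk]. exists k. lia.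
  - destruct (Nat.eq_dec (S n) (sent (schedule k))) as [E|E]; [|exists k; lia].
    destruct (Hnext _ k eq_refl) as [k' Hk']. exists k'. lia.
Qed.

Lemma decoder_follows_schedule (a : triple) pos :
  follows (record a) (fun k => leader (schedule k)) pos -> decoder a = w.
Proof.
  intros Hfollows. apply functional_extensionality. intros n.
  destruct (sent_unbounded n) as [k Hk].
  unfold decoder. rewrite (eventual_nth _ (S (pos k))); [| intros; apply output_decoder_step |].
  all: rewrite (run_follows _ _ _ Hfollows), run_schedule; simpl.
  - rewrite nth_indep with (d' := w 0) by (rewrite length_map, length_seq; lia).
    now rewrite map_nth, seq_nth.
  - now rewrite length_map, length_seq.
Qed.

End Schedule.

Definition chain_limit (c : nat -> list nat) : baire := fun i => nth i (c (S i)) 0.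

Section ChainLimit.

Variable c : nat -> list nat.
Hypothesis c_extends : forall k, extends (c (S k)) (c k).
Hypothesis c_grows : forall k, length (c k) < length (c (S k)).

Lemma chain_length_ge k : k <= length (c k).
Proof. induction k as [|k IH]; [lia|]. specialize (c_grows k). lia. Qed.

Lemma restr_chain_limit k : restr (chain_limit c) (length (c k)) = c k.
Proof.
  apply nth_ext with 0 0; [apply length_restr|]. intros i Hi. rewrite length_restr in Hi.
  rewrite nth_restr by exact Hi. unfold chain_limit.
  pose proof (chain_length_ge (S i)) as Hlen.
  destruct (Nat.le_ge_cases k (S i)) as [H|H].
  - apply extends_nth; auto. now apply extends_chain.
  - symmetry. apply extends_nth; [now apply extends_chain | lia].
Qed.

Lemma chain_limit_branch (T : list nat -> Prop) :
  is_tree T -> (forall k, T (c k)) -> branches T (chain_limit c).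
Proof.
  intros [_ Hclosed] HT n. destruct (restr_extends (chain_limit c) n (length (c n))) as [u Hu].
  - apply chain_length_ge.
  - apply (Hclosed _ u). rewrite <- Hu, restr_chain_limit. apply HT.
Qed.

End ChainLimit.

Definition splitting (T : list nat -> Prop) (t : list nat) : Prop :=
  forall m, exists n, m <= n /\ T (t ++ [n]).

Section SuperperfectTree.

Variable T : list nat -> Prop.
Hypothesis T_superperfect : superperfect_tree T.

Lemma tree_prefix s t : extends t s -> T t -> T s.
Proof. intros [u ->]. apply (proj2 (proj1 T_superperfect)). Qed.

Lemma splitting_above s : T s -> exists t, extends t s /\ T t /\ splitting T t.
Proof. apply (proj2 T_superperfect). Qed.

Lemma tree_child s : T s -> exists n, T (s ++ [n]).
Proof.
  intros Hs. destruct (splitting_above s Hs) as [t [Ets [Ht Hsplit]]].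
  destruct (Hsplit 0) as [n [_ Hn]].
  destruct Ets as [[|m u] ->].
  - rewrite app_nil_r in Hn. eauto.
  - exists m. apply (tree_prefix _ (s ++ m :: u)); auto. exists u. now rewrite <- app_assoc.
Qed.

Lemma tree_extend_to s n : T s -> length s <= n -> exists t, extends t s /\ T t /\ length t = n.
Proof.
  intros Hs Hn. replace n with (length s + (n - length s)) by lia.
  induction (n - length s) as [|d [t (Ets & Ht & Hlen)]].
  - exists s. rewrite Nat.add_0_r. auto using extends_refl.
  - destruct (tree_child t Ht) as [m Hm]. exists (t ++ [m]).
    repeat split; auto.
    + exact (extends_trans _ _ _ (extends_app t [m]) Ets).
    + rewrite length_app, Hlen. simpl. lia.
Qed.

Lemma splitting_strictly_above s :
  T s -> exists t, extends t s /\ length s < length t /\ T t /\ splitting T t.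
Proof.
  intros Hs. destruct (tree_child s Hs) as [n Hn].
  destruct (splitting_above _ Hn) as [t (Ets & Ht & Hsplit)]. exists t. repeat split; auto.
  - exact (extends_trans _ _ _ Ets (extends_app _ _)).
  - apply extends_length in Ets. rewrite length_app in Ets. simpl in Ets. lia.
Qed.

Lemma tree_extend_family (P : nat -> Prop) (sg : nat -> list nat) n :
  (forall j, P j -> T (sg j) /\ length (sg j) <= n) ->
  exists e, forall j, P j -> extends (e j) (sg j) /\ T (e j) /\ length (e j) = n.
Proof.
  intros Hsg. apply (choice (fun j e => P j -> extends e (sg j) /\ T e /\ length e = n)).
  intros j. destruct (classic (P j)) as [Hj|Hj]; [|now exists []].
  destruct (Hsg j Hj) as [HTj Hlj]. destruct (tree_extend_to (sg j) n HTj Hlj) as [e He].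
  now exists e.
Qed.

Lemma branch_through s : T s -> exists x, branches T x /\ restr x (length s) = s.
Proof.
  intros Hs.
  destruct (dependent_choice (fun _ => T) (fun _ u u' => extends u' u /\ length u < length u') s Hs)
    as [c [Hc0 Hc]].
  { intros _ u Hu. destruct (tree_child u Hu) as [m Hm]. exists (u ++ [m]).
    repeat split; auto using extends_app. rewrite length_app. simpl. lia. }
  exists (chain_limit c). split.
  - apply chain_limit_branch; [apply Hc | apply Hc | apply T_superperfect | apply Hc].
  - rewrite <- Hc0. apply restr_chain_limit; apply Hc.
Qed.

End SuperperfectTree.

Section Realization.

Variable T : list nat -> Prop.
Hypothesis T_superperfect : superperfect_tree T.
Variable L : nat -> nat.
Hypothesis L_lt : forall k, L k < 3.
Hypothesis L_moves : forall k, L (S k) <> L k.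

Definition stage_ok (k : nat) (sg : nat -> list nat) : Prop :=
  (forall j, j < 3 -> T (sg j) /\ length (sg j) = length (sg 0)) /\ splitting T (sg (L k)).

(* [V] is the record of the leader [L k] at [length (sg 0)]: it exceeds all earlier values and
   everything the other two coordinates do before the next stage. *)
Definition stage_step (k : nat) (sg sg' : nat -> list nat) : Prop :=
  (forall j, j < 3 -> extends (sg' j) (sg j)) /\
  length (sg 0) < length (sg' 0) /\
  let V := nth (length (sg 0)) (sg' (L k)) 0 in
  (forall j x, j < 3 -> j <> L k -> In x (sg' j) -> x < V) /\
  (forall x, In x (sg (L k)) -> x < V).

Lemma stage_step_exists k sg :
  stage_ok k sg -> exists sg', stage_ok (S k) sg' /\ stage_step k sg sg'.
Proof.
  intros [Hsg Hsplit].
  pose proof (L_lt k) as Hh. pose proof (L_lt (S k)) as Hq. pose proof (L_moves k) as Hqh.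
  set (h := L k) in *. set (q := L (S k)) in *. destruct (Hsg h Hh) as [_ Hlh].
  destruct (splitting_strictly_above T T_superperfect (sg q)) as [tq (Etq & Hl & HTtq & Hsplit_tq)];
    [now apply Hsg|].
  rewrite (proj2 (Hsg q Hq)) in Hl.
  destruct (tree_extend_family T T_superperfect (fun j => j < 3) sg (length tq)) as [ext Hext].
  { intros j Hj. destruct (Hsg j Hj) as [HTj ->]. split; [auto | lia]. }
  destruct (Hsplit (S (list_max (tq ++ flat_map ext [0; 1; 2])))) as [V [HV HTV]].
  assert (Hbig : forall x, In x (tq ++ flat_map ext [0; 1; 2]) -> x < V)
    by (intros x Hx; apply le_list_max in Hx; lia).
  assert (Hbig_ext : forall j x, j < 3 -> In x (ext j) -> x < V).
  { intros j x Hj Hx. apply Hbig, in_or_app. right. apply in_flat_map.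
    exists j. simpl. split; [lia | auto]. }
  destruct (tree_extend_to T T_superperfect (sg h ++ [V]) (length tq)) as [sh (Esh & HTsh & Hlsh)];
    [auto | rewrite length_app; simpl; lia |].
  set (sg' j := if j =? q then tq else if j =? h then sh else ext j).
  assert (Hsg'_h : sg' h = sh)
    by (unfold sg'; now rewrite (proj2 (Nat.eqb_neq h q)), Nat.eqb_refl).
  assert (Hsg' : forall j, j < 3 ->
            extends (sg' j) (sg j) /\ T (sg' j) /\ length (sg' j) = length tq).
  { intros j Hj. unfold sg'.
    destruct (Nat.eqb_spec j q) as [->|Hjq]; [|destruct (Nat.eqb_spec j h) as [->|Hjh]].
    - repeat split; auto.
    - repeat split; auto. exact (extends_trans _ _ _ Esh (extends_app _ _)).
    - now apply Hext. }
  assert (Hlen0 : length (sg' 0) = length tq) by (apply Hsg'; lia).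
  exists sg'. split; [split|split; [|split]].
  - intros j Hj. destruct (Hsg' j Hj) as (_ & HTj & ->). now rewrite Hlen0.
  - unfold sg'. now rewrite Nat.eqb_refl.
  - intros j Hj. apply Hsg', Hj.
  - now rewrite Hlen0.
  - cbv zeta. fold h.
    rewrite Hsg'_h, (extends_nth _ _ _ Esh) by (rewrite length_app; simpl; lia).
    rewrite app_nth2, Hlh, Nat.sub_diag by lia.
    split.
    + intros j x Hj Hjh. unfold sg'. destruct (Nat.eqb_spec j q) as [_|_].
      * intros Hx. apply Hbig, in_or_app. now left.
      * rewrite (proj2 (Nat.eqb_neq j h) Hjh). now apply Hbig_ext.
    + intros x Hx. apply (Hbig_ext h); auto. apply (in_extends (sg h)); [now apply Hext | exact Hx].
Qed.

Section Limit.

Variable sg : nat -> nat -> list nat.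
Hypothesis sg_ok : forall k, stage_ok k (sg k).
Hypothesis sg_step : forall k, stage_step k (sg k) (sg (S k)).
Variable rho : list nat.
Hypothesis sg_init : forall j, sg 0 j = rho.

Let pos k := length (sg k 0).
Let x j := chain_limit (fun k => sg k j).

Lemma stage_length k j : j < 3 -> length (sg k j) = pos k.
Proof. intros Hj. apply (proj1 (sg_ok k) j Hj). Qed.

Lemma pos_grows k : pos k < pos (S k).
Proof. apply (sg_step k). Qed.

Lemma stage_chain_grows k j : j < 3 -> length (sg k j) < length (sg (S k) j).
Proof. intros Hj. rewrite !stage_length by exact Hj. apply pos_grows. Qed.

Lemma restr_stage_limit k j : j < 3 -> restr (x j) (pos k) = sg k j.
Proof.
  intros Hj. rewrite <- (stage_length k j Hj).
  apply (restr_chain_limit (fun k => sg k j)); intros k';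
    [now apply (sg_step k') | now apply stage_chain_grows].
Qed.

Lemma stage_limit_through j : j < 3 -> branches T (x j) /\ restr (x j) (length rho) = rho.
Proof.
  intros Hj. split.
  - apply chain_limit_branch; intros; [now apply (sg_step _) | now apply stage_chain_grows
                                      | apply T_superperfect | now apply (sg_ok _)].
  - replace (length rho) with (pos 0) by (unfold pos; now rewrite sg_init).
    rewrite restr_stage_limit by exact Hj. apply sg_init.
Qed.

Lemma stage_limit_value k j i : j < 3 -> i < pos k -> x j i = nth i (sg k j) 0.
Proof.
  intros Hj Hi. apply restr_eq_nth; [|now rewrite stage_length].
  rewrite stage_length by exact Hj. now apply restr_stage_limit.
Qed.

Lemma stage_limit_dominated k j i :
  j < 3 -> i < pos (S k) -> (j = L k -> i < pos k) -> x j i < x (L k) (pos k).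
Proof.
  intros Hj Hi Hlead. destruct (sg_step k) as (_ & _ & Hother & Hold).
  rewrite (stage_limit_value (S k) (L k)) by (auto; apply pos_grows).
  destruct (Nat.eq_dec j (L k)) as [->|Hne].
  - rewrite (stage_limit_value k) by auto. apply Hold, nth_In. rewrite stage_length; auto.
  - rewrite (stage_limit_value (S k)) by auto. apply (Hother j); auto.
    apply nth_In. rewrite stage_length; auto.
Qed.

Lemma stage_limit_follows : follows (record (x 0, x 1, x 2)) L pos.
Proof.
  set (a := (x 0, x 1, x 2)).
  assert (Ea : forall j, j < 3 -> coord a j = x j) by (intros; now apply coord_triple).
  split; [|split; [|split]].
  - apply pos_grows.
  - intros i Hi. assert (Hrho : forall j, j < 3 -> coord a j i = nth i rho 0).
    { intros j Hj. now rewrite Ea, (stage_limit_value 0), sg_init. }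
    apply record_tie; rewrite !Hrho; lia.
  - intros k. apply record_leader; [apply L_lt|]. apply leadsP. split.
    + intros i j Hi Hj. rewrite !Ea by (auto; apply L_lt).
      apply stage_limit_dominated; auto. pose proof (pos_grows k). lia.
    + intros j Hj Hne. rewrite !Ea by (auto; apply L_lt).
      apply stage_limit_dominated; [auto | apply pos_grows | contradiction].
  - intros k i Hi. destruct (record a i) as [j|] eqn:E; [right | now left].
    apply record_Some in E as [Hj Hlead]. apply leadsP in Hlead as [Hprev _].
    specialize (Hprev (pos k) (L k) (proj1 Hi) (L_lt k)).
    rewrite !Ea in Hprev by (auto; apply L_lt).
    destruct (Nat.eq_dec j (L k)) as [->|Hne]; [reflexivity|].
    pose proof (stage_limit_dominated k j i Hj (proj2 Hi) ltac:(contradiction)). lia.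
Qed.

End Limit.

Lemma realize_leaders rho :
  T rho -> splitting T rho ->
  exists x : nat -> baire,
    (forall j, j < 3 -> branches T (x j) /\ restr (x j) (length rho) = rho) /\
    exists pos, follows (record (x 0, x 1, x 2)) L pos.
Proof.
  intros Hrho Hsplit.
  destruct (dependent_choice stage_ok stage_step (fun _ => rho)) as [sg [Hsg0 Hsg]].
  - split; auto.
  - exact stage_step_exists.
  - assert (Hinit : forall j, sg 0 j = rho) by now rewrite Hsg0.
    assert (Hok : forall k, stage_ok k (sg k)) by apply Hsg.
    assert (Hstep : forall k, stage_step k (sg k) (sg (S k))) by apply Hsg.
    exists (fun j => chain_limit (fun k => sg k j)). split.
    + exact (stage_limit_through sg Hok Hstep rho Hinit).
    + eexists. exact (stage_limit_follows sg Hok Hstep rho Hinit).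
Qed.

End Realization.

Lemma decoder_onto_branches T rho w :
  superperfect_tree T -> T rho -> splitting T rho ->
  exists x : nat -> baire,
    (forall j, j < 3 -> branches T (x j) /\ restr (x j) (length rho) = rho) /\
    decoder (x 0, x 1, x 2) = w.
Proof.
  intros HT Hrho Hsplit.
  destruct (realize_leaders T HT (fun k => leader (schedule w k))
              (fun k => proj1 (schedule_inv w k)) (leader_moves w) rho Hrho Hsplit)
    as [x [Hx [pos Hpos]]].
  exists x. split; [exact Hx|]. exact (decoder_follows_schedule w _ pos Hpos).
Qed.

Lemma restr_child x s t n : restr x (length s) = s -> extends s (t ++ [n]) -> x (length t) = n.
Proof.
  intros Hx Hst. pose proof (extends_length _ _ Hst) as Hlen.
  rewrite length_app in Hlen. simpl in Hlen.
  rewrite (restr_eq_nth x s) by (auto; lia).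
  rewrite (extends_nth _ _ _ Hst) by (rewrite length_app; simpl; lia).
  now rewrite nth_middle.
Qed.

Theorem proposition5p4 :
  exists f : triple -> baire,
    borel_fun f /\
    forall A : baire -> Prop, superperfect_set A -> ~ free_for f A.
Proof.
  exists decoder. split; [exact borel_decoder|].
  intros A [T [HT HA]] Hfree.
  destruct (splitting_above T HT [] (proj1 (proj1 HT))) as [t (_ & _ & Hsplit)].
  destruct (Hsplit 0) as [c [_ Hc]].
  destruct (Hsplit (S c)) as [c' [Hcc' Hc']].
  destruct (branch_through T HT _ Hc) as [w [Hw Ew]].
  destruct (splitting_above T HT _ Hc') as [rho (Erho & Hrho & Hsplit_rho)].
  destruct (decoder_onto_branches T rho w HT Hrho Hsplit_rho) as [x [Hx Hdec]].
  assert (Hxw : forall j, j < 3 -> w <> x j).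
  { intros j Hj E. pose proof (restr_child _ _ _ _ (proj2 (Hx j Hj)) Erho) as Hxc'.
    pose proof (restr_child _ _ _ _ Ew (extends_refl _)) as Hwc.
    rewrite <- E in Hxc'. lia. }
  assert (HAx : forall j, j < 3 -> A (x j)) by (intros j Hj; now apply HA, Hx).
  specialize (Hfree _ _ _ (HAx 0 ltac:(lia)) (HAx 1 ltac:(lia)) (HAx 2 ltac:(lia))).
  cbv zeta in Hfree. rewrite Hdec in Hfree.
  destruct Hfree as [E | [E | [E | E]]].
  - exact (Hxw 0 ltac:(lia) E).
  - exact (Hxw 1 ltac:(lia) E).
  - exact (Hxw 2 ltac:(lia) E).
  - now apply E, HA.
Qed.
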